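(* In the relaxed greedy algorithm described in the context, fix a phase $i\ge1$. For every inter-cluster edge $\{a,b\}$ of the cluster graph $H_{i-1}$, we have ${\tt sp}_{G'_{i-1}}(a,b)\le(2\delta+1)W_{i-1}$.
   Context: Setting. Let $G=(V,E)$ be an $n$-node $d$-dimensional $\alpha$-quasi unit ball graph ($0<\alpha\le1$): its vertices are points of $\mathbb{R}^d$, $|uv|$ is Euclidean distance, $|uv|\le\alpha$ implies $\{u,v\}\in E$, and $|uv|>1$ implies $\{u,v\}\notin E$. Edge weights are Euclidean lengths. ${\tt sp}_J(x,y)$ denotes shortest-path length in a graph $J$. Parameters: $r>1$ and $0<\delta<1$. Set $W_i=r^i\alpha/n$. $G'_{i-1}$ is any spanning subgraph of $G$; in the algorithm it is the partial spanner at the end of phase $i-1$. Cluster cover of $G'_{i-1}$ of radius $\delta W_{i-1}$: a set of centers $a$ with clusters $C_a$ partitioning $V$, such that - ${\tt sp}_{G'_{i-1}}(a,x)\le\delta W_{i-1}$ for $x\in C_a$; - ${\tt sp}_{G'_{i-1}}(a,b)>\delta W_{i-1}$ for distinct centers $a,b$. Cluster graph $H_{i-1}$: its vertex set is $V$ and it has two kinds of edges. - Intra-cluster edges: $\{a,x\}$ for each center $a$ and each $x\in C_a$. - Inter-cluster edges: $\{a,b\}$ for centers $a\ne b$ such that either ${\tt sp}_{G'_{i-1}}(a,b)\le W_{i-1}$, or some edge of $G'_{i-1}$ has one endpoint in $C_a$ and the other in $C_b$. Each edge $\{p,q\}$ of $H_{i-1}$ has weight ${\tt sp}_{G'_{i-1}}(p,q)$.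 *)

From HB Require Import structures.
From mathcomp Require Import all_boot all_order all_algebra.
From mathcomp Require Import constructive_ereal.
Set Implicit Arguments. Unset Strict Implicit. Unset Printing Implicit Defensive.
Import Order.TTheory GRing.Theory Num.Theory.
Local Open Scope ring_scope.

Section Defs.
Variables (R : rcfType) (n d : nat).

Definition edist (p q : 'rV[R]_d) : R :=
  Num.sqrt (\sum_(k < d) (p ord0 k - q ord0 k) ^+ 2).

Fixpoint walk_len (pos : 'I_n -> 'rV[R]_d) (x : 'I_n) (s : seq 'I_n) : R :=
  match s with
  | [::] => 0
  | y :: s' => edist (pos x) (pos y) + walk_len pos y s'
  end.

(* Shortest-path length sp_J(x,y) in the graph J (edge relation J) with
   Euclidean edge weights; +oo if y is unreachable from x.  It is the minimum
   of the lengths of all walks x = v0, v1, ..., vk = y with k < n edges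
   (every simple path has fewer than n edges, and since weights are
   nonnegative the shortest walk is attained by a simple path). *)
Definition sp (pos : 'I_n -> 'rV[R]_d) (J : rel 'I_n) (x y : 'I_n) : \bar R :=
  \big[Order.min/+oo%E]_(k < n)
    \big[Order.min/+oo%E]_(t : k.-tuple 'I_n | path J x t && (last x t == y))
       (walk_len pos x t)%:E.

Definition quasi_UBG (alpha : R) (pos : 'I_n -> 'rV[R]_d) (E : rel 'I_n) :=
  [/\ injective pos,
      irreflexive E, symmetric E,
      (forall u v, u != v -> edist (pos u) (pos v) <= alpha -> E u v) &
      (forall u v, E u v -> edist (pos u) (pos v) <= 1)].

Definition cluster_cover (pos : 'I_n -> 'rV[R]_d) (G' : rel 'I_n) (rad : R)
    (A : {set 'I_n}) (C : 'I_n -> {set 'I_n}) :=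
  [/\ (forall x, exists a, (a \in A) && (x \in C a)),
      (forall a b x, a \in A -> b \in A -> x \in C a -> x \in C b -> a = b),
      (forall a x, a \in A -> x \in C a -> (sp pos G' a x <= rad%:E)%E) &
      (forall a b, a \in A -> b \in A -> a != b -> (rad%:E < sp pos G' a b)%E)].

Definition inter_cluster_edge (pos : 'I_n -> 'rV[R]_d) (G' : rel 'I_n) (W : R)
    (A : {set 'I_n}) (C : 'I_n -> {set 'I_n}) (a b : 'I_n) :=
  [/\ a \in A, b \in A, a != b &
      ((sp pos G' a b <= W%:E)%E \/
       exists x y, [/\ x \in C a, y \in C b & G' x y])].

End Defs.

Definition Wph (R : rcfType) (r alpha : R) (n i : nat) : R := r ^+ i * alpha / n%:R.

From HB Require Import structures.
From mathcomp Require Import all_boot all_order all_algebra.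
From mathcomp Require Import constructive_ereal.
From mathcomp Require Import lra.
Set Implicit Arguments. Unset Strict Implicit. Unset Printing Implicit Defensive.
Import Order.TTheory GRing.Theory Num.Theory.
Local Open Scope ring_scope.

(* An inter-cluster edge {a,b} either certifies sp(a,b) <= W directly, or is
   witnessed by an edge xy of G'_{i-1} with x in C_a, y in C_b and |xy| <= W;
   then a -> x -> y -> b gives sp(a,b) <= delta W + W + delta W.  Since sp is a minimum
   over walks with fewer than n edges, concatenated walks must first be made
   duplicate-free, which cannot make them longer. *)

Lemma edist_ge0 (R : rcfType) (d : nat) (p q : 'rV[R]_d) : 0 <= edist p q.
Proof. exact: sqrtr_ge0. Qed.

Lemma edistC (R : rcfType) (d : nat) (p q : 'rV[R]_d) : edist p q = edist q p.
Proof.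
by congr Num.sqrt; apply: eq_bigr => k _; rewrite -sqrrN opprB.
Qed.

Lemma last_rev_belast (T : Type) (x : T) s :
  last (last x s) (rev (belast x s)) = x.
Proof. by case: s => [|y s] //=; rewrite rev_cons last_rcons. Qed.

Section Walks.
Variables (R : rcfType) (n d : nat) (pos : 'I_n -> 'rV[R]_d) (G' : rel 'I_n).

Lemma walk_len_ge0 x s : 0 <= walk_len pos x s.
Proof. by elim: s x => [|y s IH] x //=; rewrite addr_ge0 ?edist_ge0. Qed.

Lemma walk_len_cat x s1 s2 :
  walk_len pos x (s1 ++ s2) = walk_len pos x s1 + walk_len pos (last x s1) s2.
Proof. by elim: s1 x => [|y s IH] x /=; rewrite ?add0r // IH addrA. Qed.

Lemma walk_len_suffix x y s1 s2 :
  walk_len pos y s2 <= walk_len pos x (s1 ++ y :: s2).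
Proof.
rewrite walk_len_cat /= addrA lerDr.
by rewrite addr_ge0 ?walk_len_ge0 ?edist_ge0.
Qed.

Lemma walk_len_rev x s :
  walk_len pos (last x s) (rev (belast x s)) = walk_len pos x s.
Proof.
elim: s x => [|y s IH] x //=.
by rewrite rev_cons -cats1 walk_len_cat IH last_rev_belast /= addr0 addrC edistC.
Qed.

Lemma shorten_walk u s : path G' u s ->
  exists s', [/\ path G' u s', last u s' = last u s, uniq (u :: s'),
                 {subset s' <= s} & walk_len pos u s' <= walk_len pos u s].
Proof.
elim: {s}(size s) {-2}s (leqnn (size s)) u => [|m IH] s hs u.
  by move: hs; rewrite leqn0 => /nilP -> _; exists [::].
move: hs; case: (boolP (u \in s)) => [/splitPr [s1 s2] | u_notin_s] hs walk_s.
  have walk_s2 : path G' u s2 by move: walk_s; rewrite cat_path /= => /and3P[].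
  have size_s2 : (size s2 <= m)%N.
    by move: hs; rewrite size_cat /= addnS ltnS; apply: leq_trans; rewrite leq_addl.
  have [s' [ps' ls' us' ss' ws']] := IH s2 size_s2 u walk_s2.
  exists s'; split => //.
  - by rewrite ls' last_cat.
  - by move=> z /ss' z_s2; rewrite mem_cat inE z_s2 !orbT.
  - exact: le_trans ws' (walk_len_suffix _ _ _ _).
case: s hs walk_s u_notin_s => [|y s] hs; first by exists [::].
rewrite /= inE negb_or => /andP[uy walk_s] /andP[u_ne_y u_notin_s].
have [s' [ps' ls' us' ss' ws']] := IH s hs y walk_s.
exists (y :: s'); split => //=.
- by rewrite uy.
- by rewrite inE negb_or u_ne_y (contra (@ss' u) u_notin_s).
- by move=> z; rewrite !inE => /predU1P [->|/ss' ->]; rewrite ?eqxx ?orbT.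
- by rewrite lerD2l.
Qed.

Lemma sp_le_walk x s :
  path G' x s -> (sp pos G' x (last x s) <= (walk_len pos x s)%:E)%E.
Proof.
move=> walk_s; have [s' [ps' <- us' _ ws']] := shorten_walk walk_s.
apply: le_trans (_ : _ <= (walk_len pos x s')%:E)%E _; last by rewrite lee_fin.
have size_s' : (size s' < n)%N.
  by have := max_card (mem (x :: s')); rewrite card_ord (card_uniqP us').
apply: le_trans (bigmin_le _ (Ordinal size_s') _) _.
by apply: (@bigmin_le_cond _ _ _ _ (in_tuple s')); rewrite /= ps' eqxx.
Qed.

Lemma sp_leP x y c : (sp pos G' x y <= c%:E)%E <->
  exists s, [/\ path G' x s, last x s = y & walk_len pos x s <= c].
Proof.
split; last by case=> s [walk_s <- ws]; apply: le_trans (sp_le_walk walk_s) _.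
pose K (z : \bar R) := z = +oo%E \/ exists s,
  [/\ path G' x s, last x s = y & z = (walk_len pos x s)%:E].
have K_min u v : K u -> K v -> K (Order.min u v).
  by rewrite /Order.min; case: ifP.
have : K (sp pos G' x y).
  apply: big_ind => //; first by left.
  move=> k _; apply: big_ind => //; first by left.
  by move=> t /andP[walk_t /eqP last_t]; right; exists t.
by case=> [->|[s [walk_s last_s ->]]] //; rewrite lee_fin => ws; exists s.
Qed.

Lemma sp_edge x y : G' x y -> (sp pos G' x y <= (edist (pos x) (pos y))%:E)%E.
Proof. by move=> xy; apply/sp_leP; exists [:: y]; rewrite /= xy addr0. Qed.

Lemma sp_trans x y z c1 c2 :
  (sp pos G' x y <= c1%:E)%E -> (sp pos G' y z <= c2%:E)%E ->
  (sp pos G' x z <= (c1 + c2)%:E)%E.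
Proof.
move=> /sp_leP[s [ps <- ws]] /sp_leP[t [pt <- wt]].
apply/sp_leP; exists (s ++ t); rewrite cat_path ps pt last_cat walk_len_cat.
by split=> //; apply: lerD.
Qed.

Lemma sp_sym x y c : symmetric G' ->
  (sp pos G' x y <= c%:E)%E -> (sp pos G' y x <= c%:E)%E.
Proof.
move=> G'_sym /sp_leP[s [ps <- ws]]; apply/sp_leP.
exists (rev (belast x s)); rewrite last_rev_belast walk_len_rev; split=> //.
by rewrite rev_path (eq_path (e' := G') _) // => u v /=; exact: G'_sym.
Qed.

End Walks.

Theorem lemma2p5 (R : rcfType) (n d : nat) (alpha r delta : R)
    (pos : 'I_n -> 'rV[R]_d) (E G' : rel 'I_n) (i : nat)
    (A : {set 'I_n}) (C : 'I_n -> {set 'I_n}) (a b : 'I_n) :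
  0 < alpha -> alpha <= 1 -> 1 < r -> 0 < delta -> delta < 1 -> (0 < i)%N ->
  quasi_UBG alpha pos E ->
  (* G'_{i-1}: spanning subgraph of G (symmetric edge relation) *)
  symmetric G' -> (forall u v, G' u v -> E u v) ->
  (* partial spanner after phase i-1 only has edges of length <= W_{i-1} *)
  (forall u v, G' u v -> edist (pos u) (pos v) <= Wph r alpha n i.-1) ->
  cluster_cover pos G' (delta * Wph r alpha n i.-1) A C ->
  inter_cluster_edge pos G' (Wph r alpha n i.-1) A C a b ->
  (sp pos G' a b <= ((2 * delta + 1) * Wph r alpha n i.-1)%:E)%E.
Proof.
move=> alpha_gt0 _ r_gt1 delta_gt0 _ _ _ G'_sym _ G'_short [_ _ cover _].
case=> a_center b_center _; set W := Wph r alpha n i.-1 in G'_short cover *.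
have W_ge0 : 0 <= W.
  by rewrite divr_ge0 // mulr_ge0 ?exprn_ge0 ?ltW // (lt_trans ltr01).
case=> [sp_ab | [x [y [x_Ca y_Cb xy]]]].
  apply: le_trans sp_ab _; rewrite lee_fin -[X in X <= _]mul1r ler_wpM2r //.
  by rewrite lerDr mulr_ge0 // ltW.
have sp_ay := sp_trans (cover a x a_center x_Ca) (sp_edge pos xy).
have sp_ab := sp_trans sp_ay (sp_sym G'_sym (cover b y b_center y_Cb)).
by apply: le_trans sp_ab _; rewrite lee_fin; have := G'_short x y xy; lra.
Qed.
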